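(* Let $\mathbf R=\{R_i,t_i\}_{i\ge0}$ be a purely inseparable tower arising from a pair $(R,I_0)$ such that every $i$-th Frobenius projection $F_i\colon R_{i+1}/I_0R_{i+1}\to R_i/I_0R_i$ is surjective. Then the induced tower of $\mathbb F_p$-algebras $(R_0/I_0)_{\mathrm{red}}\to(R_1/I_0R_1)_{\mathrm{red}}\to\cdots\to(R_i/I_0R_i)_{\mathrm{red}}\to\cdots$ (transition maps induced by the $t_i$) is a perfect tower.
   Context: Fix a prime $p$; rings are commutative with $1$; $\varphi$ is absolute Frobenius. A tower of rings $\{R_i,t_i\}_{i\ge0}$ is a sequence of ring maps $R_0\xrightarrow{t_0}R_1\to\cdots$. For a ring $R$ and ideal $I_0$, write $\overline{R_i}=R_i/I_0R_i$ and $\overline{t_i}$ for induced maps. A purely inseparable tower arising from $(R,I_0)$ is a tower with (a) $R_0=R$, $p\in I_0$; (b) each $\overline{t_i}$ injective; (c) $\varphi(\overline{R_{i+1}})\subset\overline{t_i}(\overline{R_i})$; the $i$-th Frobenius projection $F_i\colon\overline{R_{i+1}}\to\overline{R_i}$ is the unique ring map with $\overline{t_i}\circ F_i=\varphi$. A perfect tower is a tower isomorphic (as an inductive system of rings) to $A\xrightarrow{\varphi}A\xrightarrow{\varphi}\cdots$ for a reduced $\mathbb F_p$-algebra $A$. *)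

From HB Require Import structures.
From mathcomp Require Import all_boot all_order all_algebra.
Set Implicit Arguments. Unset Strict Implicit. Unset Printing Implicit Defensive.
Import GRing.Theory.
Local Open Scope ring_scope.

Record tower := Tower {
  tw_ring : nat -> comPzRingType;
  tw_map : forall i, {rmorphism tw_ring i -> tw_ring i.+1} }.

Fixpoint tw_comp (T : tower) (i : nat) : tw_ring T 0 -> tw_ring T i :=
  match i with
  | 0 => fun x => x
  | i'.+1 => fun x => @tw_map T i' (@tw_comp T i' x)
  end.

Definition is_ideal (R : comPzRingType) (I : R -> Prop) : Prop :=
  [/\ I 0, (forall x y, I x -> I y -> I (x + y)) & (forall a x, I x -> I (a * x))].

Definition ext_ideal (T : tower) (I0 : tw_ring T 0 -> Prop) (i : nat)
  (y : tw_ring T i) : Prop :=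
  exists s : seq (tw_ring T i * tw_ring T 0),
    (forall u, u \in s -> I0 u.2) /\ y = \sum_(u <- s) u.1 * @tw_comp T i u.2.

(* the radical of I_0 R_i, i.e. the kernel of R_i -> (R_i / I_0 R_i)_red *)
Definition rad_ext_ideal (T : tower) (I0 : tw_ring T 0 -> Prop) (i : nat)
  (y : tw_ring T i) : Prop :=
  exists n : nat, @ext_ideal T I0 i (y ^+ n).

Definition purely_inseparable_tower (p : nat) (T : tower)
  (I0 : tw_ring T 0 -> Prop) : Prop :=
  [/\ @is_ideal (tw_ring T 0) I0, I0 (p%:R),
      (* (b): t_i-bar injective *)
      (forall i (x : tw_ring T i), @ext_ideal T I0 i.+1 (@tw_map T i x) ->
          @ext_ideal T I0 i x) &
      (* (c): Frobenius of R_{i+1}-bar lands in the image of t_i-bar *)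
      (forall i (y : tw_ring T i.+1), exists x : tw_ring T i,
          @ext_ideal T I0 i.+1 (y ^+ p - @tw_map T i x))].

(* The i-th Frobenius projection F_i is surjective: every class x-bar in
   R_i-bar is F_i(y-bar) for some y, i.e. t_i-bar(x-bar) = y-bar^p. *)
Definition frobenius_projections_surjective (p : nat) (T : tower)
  (I0 : tw_ring T 0 -> Prop) : Prop :=
  forall i (x : tw_ring T i), exists y : tw_ring T i.+1,
    @ext_ideal T I0 i.+1 (y ^+ p - @tw_map T i x).

Definition reduced_ring (A : comPzRingType) : Prop :=
  forall (a : A) (n : nat), a ^+ n = 0 -> a = 0.

(* The tower B_i := (R_i / I_0 R_i)_red, with maps induced by t_i, is a perfect
   tower: there is a reduced F_p-algebra A and ring isomorphisms
   psi_i : B_i ~= A with psi_{i+1} o tbar_i = Frob o psi_i.  A ring isomorphism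
   psi_i : R_i / rad(I_0 R_i) ~= A is encoded by the composite
   theta_i : R_i -> A, a surjective ring map whose kernel is exactly
   rad(I_0 R_i). *)
Definition reduced_quotient_tower_is_perfect (p : nat) (T : tower)
  (I0 : tw_ring T 0 -> Prop) : Prop :=
  exists (A : comPzRingType) (theta : forall i, {rmorphism tw_ring T i -> A}),
    [/\ (p%:R : A) = 0, reduced_ring A,
        (forall i, forall a : A, exists x : tw_ring T i, theta i x = a),
        (forall i (x : tw_ring T i), theta i x = 0 <-> @rad_ext_ideal T I0 i x) &
        (forall i (x : tw_ring T i), theta i.+1 (@tw_map T i x) = theta i x ^+ p)].

From HB Require Import structures.
From mathcomp Require Import all_boot all_order all_algebra ring.
From mathcomp Require Import boolp.
Set Implicit Arguments. Unset Strict Implicit. Unset Printing Implicit Defensive.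
Import GRing.Theory.
Local Open Scope quotient_scope.
Local Open Scope ring_scope.

(* Write B_i for R_i / I_0 R_i and pick lifts g_i : R_{i+1} -> R_i of the
   Frobenius projections, so that t_i (g_i y) = y^p in B_{i+1}.  Since p = 0 in
   B_{i+1}, raising to the p-th power is a ring map there; as t_i-bar is
   injective, g_i is therefore a ring map modulo I_0 R_i, and y is nilpotent in
   B_{i+1} iff g_i y is nilpotent in B_i.  Hence
   theta_i := (R_0 ->> R_0 / rad(I_0)) o g_0 o ... o g_{i-1}
   is a ring map with kernel rad(I_0 R_i), onto because the F_i are, and
   theta_{i+1} o t_i = Frob o theta_i since g_i (t_i x) = x^p modulo I_0 R_i. *)

(* The library quotient [{ideal_quot _}] requires a proper ideal, whereas here
   the ideal may be the whole ring: only its additive part is reused. *)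
Section QuotientRing.
Variables (R : comPzRingType) (K : R -> Prop).
Hypothesis K_ideal : is_ideal K.

Definition ideal_mem : pred R := fun x => `[< K x >].

Fact ideal_mem_zmod_closed : zmod_closed ideal_mem.
Proof.
have [K0 KD KM] := K_ideal.
split=> [|x y /asboolP Kx /asboolP Ky]; apply/asboolP => //.
by apply: KD => //; rewrite -mulN1r; apply: KM.
Qed.

HB.instance Definition _ := GRing.isZmodClosed.Build R ideal_mem ideal_mem_zmod_closed.

Definition quot_ring := {ideal_quot (GRing.ZmodClosed.clone R ideal_mem _)}.
HB.instance Definition _ := ZmodQuotient.on quot_ring.

Definition quot_pi : R -> quot_ring := \pi.

Lemma quot_pi_eq x y : quot_pi x = quot_pi y <-> K (x - y).
Proof.
split=> [/eqP|/asboolP Kxy]; last by apply/eqP; rewrite -Quotient.idealrBE.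
by rewrite -Quotient.idealrBE => /asboolP.
Qed.

Definition quot_mul := lift_op2 quot_ring *%R.

Lemma pi_quot_mul : {morph \pi_quot_ring : x y / x * y >-> quot_mul x y}.
Proof.
have [_ KD KM] := K_ideal.
move=> x y; unlock quot_mul; apply/esym/quot_pi_eq.
set x' := repr _; set y' := repr _.
have -> : x' * y' - x * y = y' * (x' - x) + x * (y' - y) by ring.
by apply: KD; apply: KM; apply/quot_pi_eq; rewrite /quot_pi reprK.
Qed.
Canonical pi_quot_mul_morph := PiMorph2 pi_quot_mul.

Lemma quot_mulA : associative quot_mul.
Proof. by move=> x y z; rewrite -[x]reprK -[y]reprK -[z]reprK !piE mulrA. Qed.

Lemma quot_mulC : commutative quot_mul.
Proof. by move=> x y; rewrite -[x]reprK -[y]reprK !piE mulrC. Qed.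

Lemma quot_mul1 : left_id (quot_pi 1) quot_mul.
Proof. by move=> x; rewrite -[x]reprK !piE mul1r. Qed.

Lemma quot_mulDl : left_distributive quot_mul +%R.
Proof. by move=> x y z; rewrite -[x]reprK -[y]reprK -[z]reprK !piE mulrDl. Qed.

HB.instance Definition _ :=
  GRing.Zmodule_isComPzRing.Build quot_ring quot_mulA quot_mulC quot_mul1 quot_mulDl.

Lemma quot_pi_is_zmod_morphism : zmod_morphism quot_pi.
Proof. by move=> x y; rewrite /quot_pi !piE. Qed.

Lemma quot_pi_is_monoid_morphism : monoid_morphism quot_pi.
Proof. by split=> // x y; rewrite /quot_pi piE. Qed.

HB.instance Definition _ := GRing.isZmodMorphism.Build R quot_ring quot_pi
  quot_pi_is_zmod_morphism.
HB.instance Definition _ := GRing.isMonoidMorphism.Build R quot_ring quot_pi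
  quot_pi_is_monoid_morphism.

Lemma quot_pi_eq0 x : quot_pi x = 0 <-> K x.
Proof. by rewrite -(rmorph0 quot_pi) quot_pi_eq subr0. Qed.

Lemma quot_pi_surj a : exists x, quot_pi x = a.
Proof. by exists (repr a); rewrite /quot_pi reprK. Qed.

End QuotientRing.

Section CommutativeRingFacts.
Variable R : comPzRingType.

Lemma exprD_nilpotent (x y : R) n m :
  x ^+ n = 0 -> y ^+ m = 0 -> (x + y) ^+ (n + m) = 0.
Proof.
move=> xn0 ym0; rewrite exprDn big1 // => -[j /= _] _.
case: (leqP m j) => [le_mj | lt_jm].
  by rewrite -(subnKC le_mj) exprD ym0 mul0r mulr0 mul0rn.
by rewrite -addnBA 1?ltnW // exprD xn0 !mul0r mul0rn.
Qed.

Lemma exprD_charp p (x y : R) :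
  prime p -> p%:R = 0 :> R -> (x + y) ^+ p = x ^+ p + y ^+ p.
Proof.
case: p => [//|p] p_prime p0; rewrite exprDn big_ord_recr big_ord_recl /=.
rewrite subn0 subnn bin0 binn !expr0 mulr1 mul1r !mulr1n big1 ?addr0 // => j _.
have /dvdnP[k ->] : (p.+1 %| 'C(p.+1, bump 0 j))%N.
  by rewrite prime_dvd_bin //= ltnS ltn_ord.
by rewrite mulrnA -mulr_natr p0 mulr0.
Qed.

End CommutativeRingFacts.

Definition radical (R : comPzRingType) (K : R -> Prop) (x : R) : Prop :=
  exists n, K (x ^+ n).

Section Radical.
Variables (R : comPzRingType) (K : R -> Prop).
Hypothesis K_ideal : is_ideal K.

Lemma radicalE x : radical K x <-> exists n, quot_pi K_ideal x ^+ n = 0.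
Proof.
by split=> -[n Kxn]; exists n; move: Kxn; rewrite -rmorphXn quot_pi_eq0.
Qed.

Lemma radical_is_ideal : is_ideal (radical K).
Proof.
split.
- by exists 1%N; rewrite expr1; case: K_ideal.
- move=> x y /radicalE[n xn0] /radicalE[m ym0]; apply/radicalE.
  by exists (n + m)%N; rewrite rmorphD exprD_nilpotent.
- move=> a x /radicalE[n xn0]; apply/radicalE.
  by exists n; rewrite rmorphM exprMn xn0 mulr0.
Qed.

Lemma quot_radical_reduced : reduced_ring (quot_ring radical_is_ideal).
Proof.
move=> a n; have [x <-] := quot_pi_surj a.
rewrite -rmorphXn => /quot_pi_eq0[m Kxnm]; apply/quot_pi_eq0.
by exists (n * m)%N; rewrite exprM.
Qed.

End Radical.

(* For the step i of the tower: [t] is t_i, [tau] the projection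
   R_{i+1} -> B_{i+1}, [g] the lift g_i and [f] is theta_i. *)
Section FrobeniusLift.
Variables (p : nat) (R S A B : comPzRingType).
Variables (t : {rmorphism R -> S}) (tau : {rmorphism S -> B}).
Variables (f : {rmorphism R -> A}) (g : S -> R).
Hypotheses (p_prime : prime p) (B_charp : p%:R = 0 :> B).
Hypothesis f_ker : forall x, f x = 0 <-> exists n, tau (t x) ^+ n = 0.
Hypothesis g_frobenius : forall y, tau (t (g y)) = tau y ^+ p.

Lemma frobenius_lift_congr x y : tau (t x) = tau (t y) -> f x = f y.
Proof.
move=> eq_xy; apply/eqP; rewrite -subr_eq0 -rmorphB; apply/eqP/f_ker.
by exists 1%N; rewrite expr1 !rmorphB eq_xy subrr.
Qed.

Lemma frobenius_lift_is_nmod_morphism : nmod_morphism (f \o g).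
Proof.
split=> [|x y] /=.
  rewrite -(rmorph0 f); apply: frobenius_lift_congr.
  by rewrite g_frobenius !rmorph0 expr0n /= gtn_eqF ?prime_gt0.
rewrite -rmorphD; apply: frobenius_lift_congr.
by rewrite g_frobenius !rmorphD !g_frobenius exprD_charp.
Qed.

Lemma frobenius_lift_is_monoid_morphism : monoid_morphism (f \o g).
Proof.
split=> [|x y] /=.
  rewrite -(rmorph1 f); apply: frobenius_lift_congr.
  by rewrite g_frobenius !rmorph1 expr1n.
rewrite -rmorphM; apply: frobenius_lift_congr.
by rewrite g_frobenius !rmorphM !g_frobenius exprMn.
Qed.

Definition frobenius_lift : {rmorphism S -> A} :=
  HB.pack (f \o g)
    (GRing.isNmodMorphism.Build _ _ _ frobenius_lift_is_nmod_morphism)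
    (GRing.isMonoidMorphism.Build _ _ _ frobenius_lift_is_monoid_morphism).

Lemma frobenius_liftE y : frobenius_lift y = f (g y).
Proof. by []. Qed.

Lemma frobenius_lift_eq0 y : frobenius_lift y = 0 <-> exists n, tau y ^+ n = 0.
Proof.
rewrite frobenius_liftE f_ker; split=> -[n].
  by rewrite g_frobenius -exprM; exists (p * n)%N.
move=> yn0; exists n; rewrite g_frobenius -exprM mulnC exprM yn0.
by rewrite expr0n gtn_eqF ?prime_gt0.
Qed.

Lemma frobenius_lift_surj :
    (forall a, exists x, f x = a) ->
    (forall x, exists y, tau y ^+ p = tau (t x)) ->
  forall a, exists y, frobenius_lift y = a.
Proof.
move=> f_surj tau_frobenius_surj a; have [x <-] := f_surj a.
have [y eq_yx] := tau_frobenius_surj x; exists y.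
by apply: frobenius_lift_congr; rewrite g_frobenius.
Qed.

Lemma frobenius_lift_t x : frobenius_lift (t x) = f x ^+ p.
Proof.
rewrite -rmorphXn frobenius_liftE; apply: frobenius_lift_congr.
by rewrite g_frobenius !rmorphXn.
Qed.

End FrobeniusLift.

Section ExtendedIdeal.
Variables (T : tower) (I0 : tw_ring T 0 -> Prop).
Local Notation E i := (@ext_ideal T I0 i).

Lemma ext_ideal_is_ideal i : is_ideal (E i).
Proof.
split.
- by exists [::]; rewrite big_nil.
- move=> _ _ [r [Ir ->]] [s [Is ->]]; exists (r ++ s); rewrite big_cat.
  by split=> // u; rewrite mem_cat => /orP[]; [apply: Ir | apply: Is].
- move=> a _ [r [Ir ->]]; exists [seq (a * u.1, u.2) | u <- r]; split.
    by move=> v /mapP[u r_u ->]; apply: (Ir u).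
  by rewrite big_map mulr_sumr; apply: eq_bigr => u _; rewrite mulrA.
Qed.

Lemma ext_ideal_map i x : E i x -> E i.+1 (tw_map T i x).
Proof.
move=> [r [Ir ->]]; exists [seq (tw_map T i u.1, u.2) | u <- r]; split.
  by move=> v /mapP[u r_u ->]; apply: (Ir u).
by rewrite big_map rmorph_sum; apply: eq_bigr => u _; rewrite rmorphM.
Qed.

Lemma ext_ideal_natr n i : I0 n%:R -> E i n%:R.
Proof.
move=> I0n; elim: i => [|i IHi].
  by exists [:: (1, n%:R)]; rewrite big_seq1 mul1r; split=> // u /[1!inE] /eqP->.
by rewrite -(rmorph_nat (tw_map T i)); apply: ext_ideal_map.
Qed.

End ExtendedIdeal.

Section PerfectTower.
Variables (p : nat) (T : tower) (I0 : tw_ring T 0 -> Prop).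
Variable g : forall i, tw_ring T i.+1 -> tw_ring T i.
Local Notation E i := (@ext_ideal T I0 i).
Hypotheses (p_prime : prime p) (I0p : I0 p%:R).
Hypothesis t_reflects : forall i x, E i.+1 (tw_map T i x) -> E i x.
Hypothesis g_frobenius : forall i y, E i.+1 (y ^+ p - tw_map T i (g y)).
Hypothesis frobenius_surj : frobenius_projections_surjective p I0.

Local Notation pi i := (quot_pi (ext_ideal_is_ideal I0 i)).
Local Notation rad i := (@rad_ext_ideal T I0 i).

Lemma rad_ext_ideal_map i x :
  rad i x <-> exists n, pi i.+1 (tw_map T i x) ^+ n = 0.
Proof.
split=> -[n Exn]; exists n; move: Exn; rewrite -!rmorphXn quot_pi_eq0.
  exact: ext_ideal_map.
exact: t_reflects.
Qed.

Lemma pi_charp i : p%:R = 0 :> quot_ring (ext_ideal_is_ideal I0 i).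
Proof. by rewrite -(rmorph_nat (pi i)); apply/quot_pi_eq0/ext_ideal_natr. Qed.

Lemma pi_frobenius i y : pi i.+1 (tw_map T i (g y)) = pi i.+1 y ^+ p.
Proof. by rewrite -rmorphXn; apply/esym/quot_pi_eq. Qed.

Lemma pi_frobenius_surj i x :
  exists y, pi i.+1 y ^+ p = pi i.+1 (tw_map T i x).
Proof.
by have [y Ey] := frobenius_surj x; exists y; rewrite -rmorphXn; apply/quot_pi_eq.
Qed.

Definition perfect_ring := quot_ring (radical_is_ideal (ext_ideal_is_ideal I0 0)).

Definition rad_kernel i (f : tw_ring T i -> perfect_ring) :=
  forall x, f x = 0 <-> rad i x.

Section Step.
Variables (i : nat) (f : {rmorphism tw_ring T i -> perfect_ring}).
Hypothesis f_ker : rad_kernel f.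

Lemma rad_kernel_map x : f x = 0 <-> exists n, pi i.+1 (tw_map T i x) ^+ n = 0.
Proof. by rewrite f_ker rad_ext_ideal_map. Qed.

Definition theta_lift : {rmorphism tw_ring T i.+1 -> perfect_ring} :=
  frobenius_lift p_prime (pi_charp i.+1) rad_kernel_map (@pi_frobenius i).

Lemma theta_lift_ker : rad_kernel theta_lift.
Proof. by move=> y; rewrite frobenius_lift_eq0 -radicalE. Qed.

End Step.

Definition rad_quotient_map i :=
  {f : {rmorphism tw_ring T i -> perfect_ring} | rad_kernel f}.

Fixpoint theta i : rad_quotient_map i :=
  match i return rad_quotient_map i with
  | 0 => exist _ (quot_pi _ : {rmorphism _ -> _}) (@quot_pi_eq0 _ _ _)
  | i.+1 => exist _ (theta_lift (svalP (theta i))) (theta_lift_ker (svalP (theta i)))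
  end.

Lemma theta_surj i a : exists x, sval (theta i) x = a.
Proof.
elim: i a => [|i IHi] a; first exact: quot_pi_surj.
exact: (frobenius_lift_surj _ _ _ _ IHi (@pi_frobenius_surj i)).
Qed.

Lemma theta_tw_map i x : sval (theta i.+1) (tw_map T i x) = sval (theta i) x ^+ p.
Proof. exact: frobenius_lift_t. Qed.

Lemma perfect_ring_charp : p%:R = 0 :> perfect_ring.
Proof.
rewrite -(rmorph_nat (quot_pi _)); apply/quot_pi_eq0.
by exists 1%N; rewrite expr1; apply: ext_ideal_natr.
Qed.

Theorem reduced_quotient_tower_perfect : reduced_quotient_tower_is_perfect p I0.
Proof.
exists perfect_ring, (fun i => sval (theta i)); split.
- exact: perfect_ring_charp.
- exact: quot_radical_reduced.
- exact: theta_surj.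
- by move=> i; case: (theta i).
- exact: theta_tw_map.
Qed.

End PerfectTower.

Theorem proposition3p4 (p : nat) (T : tower) (I0 : tw_ring T 0 -> Prop) :
  prime p ->
  @purely_inseparable_tower p T I0 ->
  @frobenius_projections_surjective p T I0 ->
  @reduced_quotient_tower_is_perfect p T I0.
Proof.
move=> p_prime [_ I0p t_reflects frobenius_image] frobenius_surj.
pose g i y := projT1 (cid (frobenius_image i y)).
have g_frobenius i y : @ext_ideal T I0 i.+1 (y ^+ p - tw_map T i (g i y)).
  exact: projT2 (cid (frobenius_image i y)).
exact: reduced_quotient_tower_perfect p_prime I0p t_reflects g_frobenius frobenius_surj.
Qed.
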